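(* Let $\Phi:\{0,1\}^n\to\{0,1\}^n$ and $\mu\in\{0,1\}^n$. Then $\overline{W}(\mu)\neq\emptyset$ if and only if $\Phi(\mu)=\mu$; similarly, $\underline{W}(\mu)\neq\emptyset$ if and only if $\Phi(\mu)=\mu$.
   Context: Let $\mathbf{B}=\{0,1\}$ (discrete topology), $n\ge 1$, and $\Phi:\mathbf{B}^n\to\mathbf{B}^n$ a function. For $\nu\in\mathbf{B}^n$ define $\Phi^\nu:\mathbf{B}^n\to\mathbf{B}^n$ coordinatewise by $\Phi^\nu_i(\mu)=\mu_i$ if $\nu_i=0$ and $\Phi^\nu_i(\mu)=\Phi_i(\mu)$ if $\nu_i=1$. For $\alpha^0,\dots,\alpha^k\in\mathbf{B}^n$ put $\Phi^{\alpha^0\dots\alpha^k}=\Phi^{\alpha^k}\circ\cdots\circ\Phi^{\alpha^0}$. A sequence $\alpha=(\alpha^k)_{k\in\mathbf{N}}$ in $\mathbf{B}^n$ is progressive if for every $i\in\{1,\dots,n\}$ the set $\{k:\alpha^k_i=1\}$ is infinite. $Seq$ denotes the set of strictly increasing real sequences $t_0<t_1<\cdots$ unbounded above. $P_n$ is the set of functions $\rho:\mathbf{R}\to\mathbf{B}^n$ of the form $\rho(t_k)=\alpha^k$ for all $k$ and $\rho(t)=0$ for $t\notin\{t_k\}$, where $\alpha$ is progressive and $(t_k)\in Seq$. For such $\rho$ and $\mu\in\mathbf{B}^n$, the orbit is $\Phi^\rho(\mu,t)=\mu$ for $t<t_0$ and $\Phi^\rho(\mu,t)=\Phi^{\alpha^0\dots\alpha^k}(\mu)$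 for $t\in[t_k,t_{k+1})$. The $\omega$-limit set is $\omega_\rho(\mu)=\{\mu'\in\mathbf{B}^n:\exists (s_k)\in Seq$ such that $\Phi^\rho(\mu,s_k)=\mu'$ for all sufficiently large $k\}$. For $\mu\in\mathbf{B}^n$: $\overline{W}(\mu)=\{\mu'\in\mathbf{B}^n:\exists\rho'\in P_n,\ \omega_{\rho'}(\mu')\subset\{\mu\}\}$ and $\underline{W}(\mu)=\{\mu'\in\mathbf{B}^n:\forall\rho'\in P_n,\ \omega_{\rho'}(\mu')\subset\{\mu\}\}$. *)

From mathcomp Require Import all_boot.
From Stdlib Require Import Reals.

Set Implicit Arguments.
Unset Strict Implicit.
Unset Printing Implicit Defensive.

Definition Bn (n : nat) := {ffun 'I_n -> bool}.

Definition zeroB (n : nat) : Bn n := [ffun _ => false].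

Definition Phinu (n : nat) (Phi : Bn n -> Bn n) (nu : Bn n) (mu : Bn n) : Bn n :=
  [ffun i => if nu i then Phi mu i else mu i].

(* Phi^{alpha^0 ... alpha^k} (mu) = Phi^{alpha^k} o ... o Phi^{alpha^0} (mu) *)
Fixpoint Phiseq (n : nat) (Phi : Bn n -> Bn n) (alpha : nat -> Bn n) (k : nat)
  (mu : Bn n) : Bn n :=
  match k with
  | 0 => Phinu Phi (alpha 0) mu
  | S k' => Phinu Phi (alpha (S k')) (Phiseq Phi alpha k' mu)
  end.

Definition progressive (n : nat) (alpha : nat -> Bn n) : Prop :=
  forall i : 'I_n, forall N : nat, exists k : nat, (N <= k)%coq_nat /\ alpha k i = true.

Definition Seq (t : nat -> R) : Prop :=
  (forall k, (t k < t (S k))%R) /\ (forall M : R, exists k, (M < t k)%R).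

Definition represents (n : nat) (rho : R -> Bn n) (alpha : nat -> Bn n) (t : nat -> R) : Prop :=
  progressive alpha /\ Seq t /\
  (forall k, rho (t k) = alpha k) /\
  (forall s : R, (forall k, s <> t k) -> rho s = zeroB n).

Definition Pn (n : nat) (rho : R -> Bn n) : Prop :=
  exists alpha t, represents rho alpha t.

(* the orbit Phi^rho(mu, s) = v, computed from a representation (alpha, t) of rho *)
Definition orbit_is (n : nat) (Phi : Bn n -> Bn n) (alpha : nat -> Bn n) (t : nat -> R)
  (mu : Bn n) (s : R) (v : Bn n) : Prop :=
  ((s < t 0%nat)%R /\ v = mu) \/
  (exists k, (t k <= s)%R /\ (s < t (S k))%R /\ v = Phiseq Phi alpha k mu).

Definition in_omega (n : nat) (Phi : Bn n -> Bn n) (rho : R -> Bn n) (mu mu' : Bn n) : Prop :=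
  exists alpha t, represents rho alpha t /\
    exists s : nat -> R, Seq s /\
      exists N, forall k, (N <= k)%coq_nat -> orbit_is Phi alpha t mu (s k) mu'.

Definition omega_sub1 (n : nat) (Phi : Bn n -> Bn n) (rho : R -> Bn n) (mu mu0 : Bn n) : Prop :=
  forall mu', in_omega Phi rho mu mu' -> mu' = mu0.

Definition Wover (n : nat) (Phi : Bn n -> Bn n) (mu : Bn n) (mu' : Bn n) : Prop :=
  exists rho, Pn rho /\ omega_sub1 Phi rho mu' mu.

Definition Wunder (n : nat) (Phi : Bn n -> Bn n) (mu : Bn n) (mu' : Bn n) : Prop :=
  forall rho, Pn rho -> omega_sub1 Phi rho mu' mu.

(* If [omega_rho(mu')] is contained in [{mu}], then, the state space being finite, some
   state is visited at infinitely many update steps; sampling the orbit at the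
   corresponding update times shows that this state lies in [omega_rho(mu')], so it is
   [mu], and the same argument applied to the states different from [mu] shows that the
   orbit is eventually constant equal to [mu].  Since every coordinate is updated again
   later, [Phi_i(mu) = mu_i] for all [i].  Conversely a fixed point of [Phi] is fixed by
   every [Phi^nu], so its orbit under any [rho] is constant; and [P_n] is inhabited
   (update everything at the integer times), so [mu] then lies in both sets. *)
From mathcomp Require Import all_boot.
From Stdlib Require Import Reals Lra Lia Classical ClassicalEpsilon.

Definition inf_often (P : nat -> Prop) : Prop :=
  forall N, exists k, (N <= k)%coq_nat /\ P k.

Lemma not_eventually_inf_often (P : nat -> Prop) :
  ~ (exists K, forall k, (K <= k)%coq_nat -> P k) -> inf_often (fun k => ~ P k).
Proof.
move=> notev N; apply: NNPP => noex; apply: notev; exists N => k le_Nk.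
by apply: NNPP => nPk; apply: noex; exists k.
Qed.

Lemma inf_often_pigeonhole (T : finType) (f : nat -> T) (P : nat -> Prop) :
  inf_often P -> exists v, inf_often (fun k => P k /\ f k = v).
Proof.
move=> infP; apply: NNPP => noval.
have bound v : exists N, forall k, (N <= k)%coq_nat -> P k -> f k <> v.
  apply: NNPP => nobound; apply: noval; exists v => N.
  apply: NNPP => noex; apply: nobound; exists N => k le_Nk Pk fk_v.
  by apply: noex; exists k.
pose N v := proj1_sig (constructive_indefinite_description _ (bound v)).
have [k [le_k Pk]] := infP (\max_(v : T) N v).
apply: (proj2_sig (constructive_indefinite_description _ (bound (f k)))) Pk _ => //.
by apply: Nat.le_trans le_k; apply/leP; apply: (leq_bigmax_cond (f k)).
Qed.

Lemma inf_often_subseq (P : nat -> Prop) :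
  inf_often P ->
  exists g : nat -> nat, (forall j, (g j < g (S j))%coq_nat) /\ (forall j, P (g j)).
Proof.
move=> infP.
pose h N := proj1_sig (constructive_indefinite_description _ (infP N)).
have hP N : (N <= h N)%coq_nat /\ P (h N).
  exact: proj2_sig (constructive_indefinite_description _ (infP N)).
pose g := fix g j := if j is S j' then h (S (g j')) else h 0%nat.
exists g; split=> [j | [|j]].
- exact: (hP (S (g j))).1.
- exact: (hP 0%nat).2.
- exact: (hP (S (g j))).2.
Qed.

Lemma Seq_le {t : nat -> R} :
  (forall k, (t k < t (S k))%R) -> forall {a b}, (a <= b)%coq_nat -> (t a <= t b)%R.
Proof.
move=> t_incr a b; elim=> [|m _ IH]; first lra.
by have := t_incr m; lra.
Qed.

Section Orbits.

Variables (n : nat) (Phi : Bn n -> Bn n).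

Lemma Phiseq_fixpoint (alpha : nat -> Bn n) (mu : Bn n) k :
  Phi mu = mu -> Phiseq Phi alpha k mu = mu.
Proof.
move=> fix_mu.
have Phinu_mu nu : Phinu Phi nu mu = mu.
  by apply/ffunP => i; rewrite /Phinu ffunE fix_mu; case: (nu i).
by elim: k => [|k IH] /=; rewrite ?IH Phinu_mu.
Qed.

(* The orbit equals [Phiseq k] on [[t k, t (k+1))], so sampling at the times [t (g j)]
   along an increasing [g] reads off [Phiseq (g j)]. *)
Lemma in_omega_inf_often (rho : R -> Bn n) alpha t (mu v : Bn n) :
  represents rho alpha t -> inf_often (fun k => Phiseq Phi alpha k mu = v) ->
  in_omega Phi rho mu v.
Proof.
move=> rep /inf_often_subseq [g [g_incr g_v]].
have g_ge j : (j <= g j)%coq_nat by elim: j => [|j IH]; [lia | have := g_incr j; lia].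
have rep' := rep; case: rep' => _ [[t_incr t_unb] _].
exists alpha, t; split=> //; exists (fun j => t (g j)); split; first split.
- move=> j; have := Seq_le t_incr (g_incr j); have := t_incr (g j); lra.
- move=> M; have [k Mk] := t_unb M; exists k.
  by have := Seq_le t_incr (g_ge k); lra.
- exists 0%nat => j _; right; exists (g j); do 2?split; try lra; first exact: t_incr.
  by rewrite g_v.
Qed.

Lemma orbit_eventually_eq (rho : R -> Bn n) alpha t (mu mu' : Bn n) :
  represents rho alpha t -> omega_sub1 Phi rho mu' mu ->
  exists K, forall k, (K <= k)%coq_nat -> Phiseq Phi alpha k mu' = mu.
Proof.
move=> rep omega_mu; apply: NNPP => /not_eventually_inf_often.
move=> /(@inf_often_pigeonhole _ (fun k => Phiseq Phi alpha k mu')) [v inf_v].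
have [k [_ [neq_mu eq_v]]] := inf_v 0%nat.
apply: neq_mu; rewrite eq_v; apply: omega_mu; apply: in_omega_inf_often rep _ => N.
by have [j [le_Nj [_ eq_j]]] := inf_v N; exists j.
Qed.

Lemma eventually_constant_fixpoint (alpha : nat -> Bn n) (mu mu' : Bn n) :
  progressive alpha ->
  (exists K, forall k, (K <= k)%coq_nat -> Phiseq Phi alpha k mu' = mu) ->
  Phi mu = mu.
Proof.
move=> prog [K evK]; apply/ffunP => i.
have [[|k] [le_k alpha_i]] := prog i (S K); first lia.
have := congr1 (fun f : Bn n => f i) (evK (S k) ltac:(lia)).
by rewrite /= evK; [rewrite /Phinu ffunE alpha_i | lia].
Qed.

Lemma Wover_fixpoint (mu mu' : Bn n) : Wover Phi mu mu' -> Phi mu = mu.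
Proof.
case=> rho [[alpha [t rep]] omega_mu].
apply: (@eventually_constant_fixpoint alpha mu mu'); first by case: rep.
exact: orbit_eventually_eq rep omega_mu.
Qed.

Lemma Wunder_fixpoint (mu : Bn n) : Phi mu = mu -> Wunder Phi mu mu.
Proof.
move=> fix_mu rho _ v [alpha [t [_ [s [_ [N orbit_v]]]]]].
case: (orbit_v N (le_n N)) => [[_ ->] // | [k [_ [_ ->]]]].
exact: Phiseq_fixpoint.
Qed.

Definition synchronous_rho : R -> Bn n := fun s =>
  if excluded_middle_informative (exists k, s = INR k)
  then [ffun _ => true] else zeroB n.

Lemma Pn_synchronous_rho : Pn synchronous_rho.
Proof.
exists (fun _ => [ffun _ => true]), INR; split; [|split; [|split]].
- by move=> i N; exists N; split; [lia | rewrite ffunE].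
- split=> [k | M]; first by rewrite S_INR; lra.
  by have [k Mk] := INR_archimed 1 M ltac:(lra); exists k; lra.
- move=> k; rewrite /synchronous_rho; case: excluded_middle_informative => // nk.
  by case: nk; exists k.
- move=> s s_ne; rewrite /synchronous_rho.
  by case: excluded_middle_informative => // [[k s_k]]; case: (s_ne k).
Qed.

Lemma Wunder_Wover (mu mu' : Bn n) : Wunder Phi mu mu' -> Wover Phi mu mu'.
Proof.
by move=> all_rho; exists synchronous_rho; split; [exact: Pn_synchronous_rho | exact: all_rho Pn_synchronous_rho].
Qed.

End Orbits.

Theorem theorem40 (n : nat) (hn : (1 <= n)%coq_nat) (Phi : Bn n -> Bn n) (mu : Bn n) :
  ((exists mu', Wover Phi mu mu') <-> Phi mu = mu) /\
  ((exists mu', Wunder Phi mu mu') <-> Phi mu = mu).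
Proof.
split; split.
- by case=> mu'; apply: Wover_fixpoint.
- by move=> fix_mu; exists mu; apply: Wunder_Wover; apply: Wunder_fixpoint.
- by case=> mu' /Wunder_Wover; apply: Wover_fixpoint.
- by move=> fix_mu; exists mu; apply: Wunder_fixpoint.
Qed.
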